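(* Let $A\otimes B$ be a two-qubit Pauli operator with $A,B\in\{X,Y,Z\}$, and let $\rho$ be a valid two-qubit density matrix of the form $$\rho=\tfrac14\Big(I\otimes I+\sum_{q}c_q\,q\Big),\qquad c_q\in\mathbb{R}.$$ Here $q$ ranges over the five operators $A\otimes B$ and $A'\otimes B'$ with $A'\in\{X,Y,Z\}\setminus\{A\}$ and $B'\in\{X,Y,Z\}\setminus\{B\}$. Equivalently, $\rho$ is a Group 2 $X$-state with maximally-mixed subsystems, or a Mermin-state $\mathcal{Q}_i$, $i=1,\dots,9$, with all local coefficients zero. Let $\mathcal{M}(\rho)$ be the sum of the two largest eigenvalues of $\beta^T\beta$, where $\beta$ is the $3\times3$ real matrix with entries $\beta_{ij}=\operatorname{Tr}(\rho\,\sigma_i\otimes\sigma_j)$, $\sigma_1=X,\sigma_2=Y,\sigma_3=Z$. Then $\mathcal{M}(\rho)=2$ (i.e. $\rho$ violates the Bell (CHSH) inequality maximally) if and only if $\rho$ is pure, i.e. $\operatorname{Tr}(\rho^2)=1$.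
   Context: Valid means $\rho$ is Hermitian, of trace one and positive semidefinite. By the Horodecki criterion, a two-qubit state violates the Bell (CHSH) inequality iff $\mathcal{M}(\rho)>1$; maximal violation corresponds to the maximal possible value $\mathcal{M}(\rho)=2$. *)

From HB Require Import structures.
From mathcomp Require Import all_boot all_order all_algebra.
From mathcomp Require Import complex mxtens.
Set Implicit Arguments. Unset Strict Implicit. Unset Printing Implicit Defensive.
Import Order.TTheory GRing.Theory Num.Theory.
Local Open Scope ring_scope.
Local Open Scope complex_scope.

Section Qubits.
Variable R : rcfType.
Local Notation C := R[i].

Definition pauliX : 'M[C]_2 := \matrix_(a, b) (if a == b then 0 else 1).
Definition pauliY : 'M[C]_2 :=
  \matrix_(a, b) (if a == b then 0 else if val a == 0%N then - 'i else 'i).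
Definition pauliZ : 'M[C]_2 :=
  \matrix_(a, b) (if a == b then (if val a == 0%N then 1 else -1) else 0).

(* sigma_1 = X, sigma_2 = Y, sigma_3 = Z, indexed by 'I_3 = {0,1,2} *)
Definition sigma (k : 'I_3) : 'M[C]_2 :=
  match val k with 0%N => pauliX | 1%N => pauliY | _ => pauliZ end.

Definition adjmx m n (M : 'M[C]_(m, n)) : 'M[C]_(n, m) := (map_mx (@conjc R) M)^T.

Definition density_matrix n (rho : 'M[C]_n) : Prop :=
  [/\ adjmx rho = rho, \tr rho = 1 &
      forall v : 'cV[C]_n, 0 <= (adjmx v *m rho *m v) 0 0].

(* correlation matrix beta_ij = Tr(rho sigma_i (x) sigma_j) (a real number for
   Hermitian rho; we take its real part to view beta as a real 3x3 matrix) *)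
Definition corr_mx (rho : 'M[C]_(2 * 2)) : 'M[R]_3 :=
  \matrix_(i, j) @complex.Re R (\tr (rho *m (sigma i *t sigma j))).

(* "M(rho) = m": m is the sum of the two largest eigenvalues (with multiplicity)
   of beta^T beta, i.e. char_poly(beta^T beta) = (X-l1)(X-l2)(X-l3) with
   l1 >= l2 >= l3 and m = l1 + l2. *)
Definition horodecki_M_is (rho : 'M[C]_(2 * 2)) (m : R) : Prop :=
  exists l1 l2 l3 : R,
    [/\ l3 <= l2, l2 <= l1,
        char_poly ((corr_mx rho)^T *m corr_mx rho)
          = ('X - l1%:P) * ('X - l2%:P) * ('X - l3%:P)
      & m = l1 + l2].

End Qubits.
Arguments sigma {R} k.
Arguments pauliX {R}.
Arguments pauliY {R}.
Arguments pauliZ {R}.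

From HB Require Import structures.
From mathcomp Require Import all_boot all_order all_algebra.
From mathcomp Require Import complex mxtens.
From mathcomp Require Import ring lra.
Set Implicit Arguments. Unset Strict Implicit. Unset Printing Implicit Defensive.
Import Order.TTheory GRing.Theory Num.Theory.
Local Open Scope ring_scope.
Local Open Scope complex_scope.

(* The correlation matrix beta of rho has c0 at (A, B), zeros in the rest of row A
   and column B, and the 2 x 2 block K = (c a b) on the remaining indices.  Hence
   beta^T beta has eigenvalues c0^2, ((u + v)/2)^2 and ((u - v)/2)^2, where u^2 and
   v^2 are (K00 -+ K11)^2 + (K01 +- K10)^2 (signs fixed by A and B), and
   Tr(rho^2) = (1 + c0^2 + Tr(K^T K))/4 = (1 + sum of the eigenvalues)/4.
   Positivity: rho commutes with sigma_A (x) sigma_B; on its eigenspaces for +1 and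
   -1, spanned by tensor products of Pauli eigenvectors, rho has, up to a common
   factor, diagonal entries 1 + c0, resp. 1 - c0, and an off-diagonal entry of
   modulus u, resp. v, so Cauchy-Schwarz gives u <= 1 + c0 and v <= 1 - c0.  Then all
   three eigenvalues are at most 1: rho is pure iff all of them are 1, M(rho) = 2
   iff two of them are 1, and the constraints on u, v and c0 force the third one
   to be 1 as soon as two of them are. *)

(* Unqualified [Re]/[Im] would be Num's real and imaginary parts, valued in R[i]. *)
Local Notation Re := complex.Re.
Local Notation Im := complex.Im.

Section ComplexParts.
Variable R : rcfType.
Implicit Types x y : R[i].

Lemma complexP x y : Re x = Re y -> Im x = Im y -> x = y.
Proof. by case: x y => [a b] [c d] /= -> ->. Qed.

Lemma ReD x y : Re (x + y) = Re x + Re y. Proof. by case: x y => [? ?] []. Qed.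
Lemma ImD x y : Im (x + y) = Im x + Im y. Proof. by case: x y => [? ?] []. Qed.
Lemma ReN x : Re (- x) = - Re x. Proof. by case: x. Qed.
Lemma ImN x : Im (- x) = - Im x. Proof. by case: x. Qed.
Lemma ReM x y : Re (x * y) = Re x * Re y - Im x * Im y.
Proof. by case: x y => [? ?] []. Qed.
Lemma ImM x y : Im (x * y) = Re x * Im y + Im x * Re y.
Proof. by case: x y => [? ?] []. Qed.
Lemma ReJ x : Re x^*%C = Re x. Proof. by case: x. Qed.
Lemma ImJ x : Im x^*%C = - Im x. Proof. by case: x. Qed.
Lemma ReMn x n : Re (x *+ n) = Re x *+ n.
Proof. by elim: n => [|n IHn]; rewrite ?mulr0n // !mulrS ReD IHn. Qed.
Lemma ImMn x n : Im (x *+ n) = Im x *+ n.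
Proof. by elim: n => [|n IHn]; rewrite ?mulr0n // !mulrS ImD IHn. Qed.

Lemma ReC (a : R) : Re a%:C = a. Proof. by []. Qed.
Lemma ImC (a : R) : Im a%:C = 0. Proof. by []. Qed.
Lemma Re1 : Re (1 : R[i]) = 1. Proof. by []. Qed.
Lemma Im1 : Im (1 : R[i]) = 0. Proof. by []. Qed.
Lemma Re0 : Re (0 : R[i]) = 0. Proof. by []. Qed.
Lemma Im0 : Im (0 : R[i]) = 0. Proof. by []. Qed.
Lemma ReL (a b : R) : Re (a +i* b) = a. Proof. by []. Qed.
Lemma ImL (a b : R) : Im (a +i* b) = b. Proof. by []. Qed.

Definition ReImE := (ReD, ImD, ReN, ImN, ReM, ImM, ReJ, ImJ, ReMn, ImMn,
  Re0, Im0, Re1, Im1, ReL, ImL, ReC, ImC).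

Lemma conjcM x y : (x * y)^*%C = x^*%C * y^*%C.
Proof. by apply: complexP; rewrite !ReImE; ring. Qed.

End ComplexParts.

Ltac complex_ring := apply: complexP; rewrite ?ReImE; ring.

Lemma mxtrace_tens (K : comPzRingType) m n (A : 'M[K]_m) (B : 'M[K]_n) :
  \tr (A *t B) = \tr A * \tr B.
Proof. by rewrite /mxtrace mulr_sum; apply: eq_bigr => k _; rewrite mxE. Qed.

Lemma tensmx11 (K : pzRingType) m n : (1%:M : 'M[K]_m) *t (1%:M : 'M[K]_n) = 1%:M.
Proof.
apply/matrixP => i j.
case: (mxtens_indexP i) => i1 i2; case: (mxtens_indexP j) => j1 j2.
rewrite tensmxE !mxE (inj_eq (can_inj (@mxtens_indexK _ _))) xpair_eqE.
by rewrite -natrM mulnb.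
Qed.

Lemma mxtrace_sum (K : pzSemiRingType) n I (r : seq I) (P : pred I) (F : I -> 'M[K]_n) :
  \tr (\sum_(i <- r | P i) F i) = \sum_(i <- r | P i) \tr (F i).
Proof. exact: raddf_sum. Qed.

Lemma mulTmxE (K : pzSemiRingType) m n p (M : 'M[K]_(m, n)) (N : 'M[K]_(m, p)) x y :
  (M^T *m N) x y = \sum_a M a x * N a y.
Proof. by rewrite !mxE; apply: eq_bigr => a _; rewrite mxE. Qed.

Lemma mxtrace_mulTmx (K : pzSemiRingType) m n (N : 'M[K]_(m, n)) :
  \tr (N^T *m N) = \sum_i \sum_j N i j ^+ 2.
Proof.
rewrite /mxtrace exchange_big; apply: eq_bigr => j _; rewrite mulTmxE.
by apply: eq_bigr => i _; rewrite expr2.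
Qed.

Lemma sum_neq_lift (V : nmodType) n (j : 'I_n) (F : 'I_n -> V) :
  \sum_(i < n | i != j) F i = \sum_(k < n.-1) F (lift j k).
Proof.
rewrite big_mkcond (bigD1_ord j) //= eqxx add0r.
by apply: eq_bigr => k _; rewrite lift_eqF.
Qed.

Lemma sum_delta (V : pzSemiRingType) (I : finType) (P : pred I) (F : I -> V) i :
  \sum_(j | P j) F j * (j == i)%:R = if P i then F i else 0.
Proof.
rewrite big_mkcond (bigD1 i) //= eqxx mulr1 big1 ?addr0 // => j /negbTE ->.
by rewrite mulr0 if_same.
Qed.

Lemma sum_ord2 (V : nmodType) (F : 'I_2 -> V) : \sum_(i < 2) F i = F 0 + F 1.
Proof.
rewrite !big_ord_recl !big_ord0 addr0; congr (F _ + F _); exact: val_inj.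
Qed.

Lemma det_mx2 (K : comNzRingType) (N : 'M[K]_2) : \det N = N 0 0 * N 1 1 - N 0 1 * N 1 0.
Proof.
rewrite (expand_det_row _ 0) sum_ord2 /cofactor !det_mx11 !mxE /=.
have -> : lift (0 : 'I_2) 0 = 1 by apply: val_inj.
have -> : lift (1 : 'I_2) 0 = 0 by apply: val_inj.
by rewrite expr0 expr1 mul1r mulN1r mulrN.
Qed.

Lemma char_poly2 (K : comNzRingType) (N : 'M[K]_2) :
  char_poly N = 'X^2 - (\tr N)%:P * 'X + (\det N)%:P.
Proof.
rewrite /char_poly det_mx2 /mxtrace sum_ord2 det_mx2 !mxE /=.
rewrite !polyCB !polyCD !polyCM; ring.
Qed.

Lemma char_poly_expand_row (K : comNzRingType) n (M : 'M[K]_n) (i : 'I_n) :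
  (forall j, j != i -> M i j = 0) ->
  char_poly M = ('X - (M i i)%:P) * char_poly (row' i (col' i M)).
Proof.
move=> Mi0; rewrite /char_poly (expand_det_row _ i) (bigD1 i) //= big1 ?addr0 => [|j ji].
  rewrite !mxE eqxx mulr1n /cofactor -signr_odd addnn odd_double expr0 mul1r.
  by rewrite row'_col'_char_poly_mx.
have ij : (i == j) = false by rewrite eq_sym (negbTE ji).
by rewrite !mxE ij Mi0 // mulr0n polyC0 subrr mul0r.
Qed.

Lemma monic_quadratic_factor (K : comNzRingType) (a b : K) :
  ('X - a%:P) * ('X - b%:P) = 'X^2 - (a + b)%:P * 'X + (a * b)%:P.
Proof. by rewrite polyCD polyCM; ring. Qed.

Section HilbertSchmidt.
Variable R : rcfType.
Local Notation C := R[i].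
Implicit Types (a : C).

Lemma adjmxD m n (A B : 'M[C]_(m, n)) : adjmx (A + B) = adjmx A + adjmx B.
Proof. by apply/matrixP => i j; rewrite !mxE rmorphD. Qed.

Lemma adjmxZ m n (a : C) (A : 'M[C]_(m, n)) : adjmx (a *: A) = a^*%C *: adjmx A.
Proof. by apply/matrixP => i j; rewrite !mxE conjcM. Qed.

Lemma adjmxM m n p (A : 'M[C]_(m, n)) (B : 'M[C]_(n, p)) :
  adjmx (A *m B) = adjmx B *m adjmx A.
Proof. by rewrite /adjmx map_mxM trmx_mul. Qed.

Lemma adjmxK m n (A : 'M[C]_(m, n)) : adjmx (adjmx A) = A.
Proof. by apply/matrixP => i j; rewrite !mxE conjcK. Qed.

Lemma adjmx_tens m n p q (A : 'M[C]_(m, n)) (B : 'M[C]_(p, q)) :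
  adjmx (A *t B) = adjmx A *t adjmx B.
Proof. by rewrite /adjmx map_mxT trmx_tens. Qed.

Lemma mxtrace_adj n (A : 'M[C]_n) : \tr (adjmx A) = (\tr A)^*%C.
Proof. by rewrite mxtrace_tr trace_map_mx. Qed.

(* Tr(U^* M W).  Allowing k columns instead of one lets tensor products of column
   vectors, which have 1 * 1 columns, be used directly. *)
Definition hsform n k (U : 'M[C]_(n, k)) (M : 'M[C]_n) (W : 'M[C]_(n, k)) : C :=
  \tr (adjmx U *m M *m W).

Lemma hsform1 n k (U W : 'M[C]_(n, k)) : hsform U 1%:M W = \tr (adjmx U *m W).
Proof. by rewrite /hsform mulmx1. Qed.

Lemma hsformD n k (U W : 'M[C]_(n, k)) M N :
  hsform U (M + N) W = hsform U M W + hsform U N W.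
Proof. by rewrite /hsform mulmxDr mulmxDl mxtraceD. Qed.

Lemma hsformZ n k (U W : 'M[C]_(n, k)) a M : hsform U (a *: M) W = a * hsform U M W.
Proof. by rewrite /hsform -scalemxAr -scalemxAl mxtraceZ. Qed.

Lemma hsform_sum n k (U W : 'M[C]_(n, k)) I (r : seq I) (P : pred I) F :
  hsform U (\sum_(i <- r | P i) F i) W = \sum_(i <- r | P i) hsform U (F i) W.
Proof. by rewrite /hsform mulmx_sumr mulmx_suml raddf_sum. Qed.

Lemma hsform_tens m n k l (U W : 'M[C]_(m, k)) (U' W' : 'M[C]_(n, l)) M M' :
  hsform (U *t U') (M *t M') (W *t W') = hsform U M W * hsform U' M' W'.
Proof. by rewrite /hsform adjmx_tens !tensmx_mul mxtrace_tens. Qed.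

Lemma hsform_adj n k (U W : 'M[C]_(n, k)) M : hsform W M U = (hsform U (adjmx M) W)^*%C.
Proof. by rewrite /hsform -mxtrace_adj !adjmxM !adjmxK mulmxA. Qed.

Lemma hsformDl n k (U U' W : 'M[C]_(n, k)) M :
  hsform (U + U') M W = hsform U M W + hsform U' M W.
Proof. by rewrite /hsform adjmxD !mulmxDl mxtraceD. Qed.

Lemma hsformDr n k (U W W' : 'M[C]_(n, k)) M :
  hsform U M (W + W') = hsform U M W + hsform U M W'.
Proof. by rewrite /hsform mulmxDr mxtraceD. Qed.

Lemma hsformZl n k (U W : 'M[C]_(n, k)) M a : hsform (a *: U) M W = a^*%C * hsform U M W.
Proof. by rewrite /hsform adjmxZ -!scalemxAl mxtraceZ. Qed.

Lemma hsformZr n k (U W : 'M[C]_(n, k)) M a : hsform U M (a *: W) = a * hsform U M W.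
Proof. by rewrite /hsform -scalemxAr mxtraceZ. Qed.

Lemma hsform_comb n k (U W : 'M[C]_(n, k)) M (s t : C) :
  hsform (s *: U + t *: W) M (s *: U + t *: W) =
  s^*%C * s * hsform U M U + s^*%C * t * hsform U M W
  + t^*%C * s * hsform W M U + t^*%C * t * hsform W M W.
Proof. by rewrite hsformDl !hsformDr !hsformZl !hsformZr; ring. Qed.

Lemma psd_hsform n (M : 'M[C]_n) :
  (forall v : 'cV[C]_n, 0 <= (adjmx v *m M *m v) 0 0) ->
  forall k (V : 'M[C]_(n, k)), 0 <= hsform V M V.
Proof.
move=> psdM k V; rewrite /hsform /mxtrace; apply: sumr_ge0 => j _.
have -> : (adjmx V *m M *m V) j j = (adjmx (col j V) *m M *m col j V) 0 0.
  rewrite !mxE; apply: eq_bigr => l _; rewrite !mxE; congr (_ * _).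
  by apply: eq_bigr => p _; rewrite !mxE.
exact: psdM.
Qed.

Lemma ge0_complex_real (z : C) : 0 <= z -> z = (Re z)%:C.
Proof. by move=> /ger0_Im z0; apply: complexP; rewrite ?ReC ?ImC. Qed.

Lemma binary_psd_bound (a b N : R) :
  (forall x y, 0 <= a * x ^+ 2 - 2%:R * N * x * y + N * b * y ^+ 2) ->
  0 <= b -> 0 <= N -> N <= a * b.
Proof.
move=> psdQ b0 N0; have a0 := psdQ 1 0; have hb := psdQ b 1.
have [b_eq0|b_gt0] := eqVneq b 0; last first.
  have : 0 < b by rewrite lt_def b_gt0.
  nra.
have hN := psdQ N (a + 1); rewrite b_eq0 in hN *.
have := mulr_ge0 (mulr_ge0 N0 N0) a0.
nra.
Qed.

Lemma hsform_cauchy_schwarz n k (M : 'M[C]_n) (U W : 'M[C]_(n, k)) :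
  adjmx M = M -> (forall V : 'M[C]_(n, k), 0 <= hsform V M V) ->
  hsform U M W * (hsform U M W)^*%C <= hsform U M U * hsform W M W.
Proof.
move=> hermM psdM; set q := hsform U M W.
have qJ : hsform W M U = q^*%C by rewrite hsform_adj hermM.
have [a Ea] : exists a : R, hsform U M U = a%:C.
  by exists (Re (hsform U M U)); apply/ge0_complex_real.
have [b Eb] : exists b : R, hsform W M W = b%:C.
  by exists (Re (hsform W M W)); apply/ge0_complex_real.
have [N EN] : exists N : R, q * q^*%C = N%:C.
  by exists (Re (q * q^*%C)); apply/ge0_complex_real/mulcJ_ge0.
have N_def : N = Re q ^+ 2 + Im q ^+ 2.
  by have := congr1 (@complex.Re R) EN; rewrite !ReImE => <-; ring.
have key (x y : R) :
    hsform (x%:C *: U - (y%:C * q^*%C) *: W) M (x%:C *: U - (y%:C * q^*%C) *: W)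
    = (a * x ^+ 2 - 2%:R * N * x * y + N * b * y ^+ 2)%:C.
  by rewrite -scaleNr hsform_comb qJ Ea Eb N_def; complex_ring.
rewrite EN Ea Eb -rmorphM lecR; apply: binary_psd_bound.
- by move=> x y; rewrite -ler0c -key psdM.
- by rewrite -ler0c -Eb psdM.
- by rewrite -ler0c -EN mulcJ_ge0.
Qed.

End HilbertSchmidt.

Section Pauli.
Variable R : rcfType.
Local Notation C := R[i].

Lemma mxtrace_sigma (a : 'I_3) : \tr (sigma a : 'M[C]_2) = 0.
Proof.
by case: a => [[|[|[|?]]] ?] //; rewrite /mxtrace /sigma !big_ord_recl !big_ord0 /= !mxE /=;
  complex_ring.
Qed.

Lemma mxtrace_sigmaM (a b : 'I_3) :
  \tr (sigma a *m sigma b : 'M[C]_2) = (a == b)%:R *+ 2.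
Proof.
by case: a => [[|[|[|?]]] ?] //; case: b => [[|[|[|?]]] ?] //;
  rewrite /mxtrace /sigma !big_ord_recl !big_ord0 /= !mxE !big_ord_recl !big_ord0 /= !mxE /=;
  complex_ring.
Qed.

Definition sgn (s : bool) : R := if s then 1 else -1.

Definition pauli_orient (a : 'I_3) : R := if val a == 1%N then 1 else -1.

(* Eigenvectors of sigma a for the eigenvalues 1 (s = true) and -1, of squared norm 2,
   with phases chosen so that the two other Pauli matrices have off-diagonal entries
   2 and +-2i (see hsform_pauli_eigvec_offdiag). *)
Definition pauli_eigvec (a : 'I_3) (s : bool) : 'cV[C]_2 :=
  let: (x, y) := match val a, s with
    | 0%N, true => (1, 1) | 0%N, false => (- 'i%C, 'i%C)
    | 1%N, true => (1, 'i%C) | 1%N, false => ('i%C, 1)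
    | _, true => (1 + 'i%C, 0) | _, false => (0, 1 + 'i%C) end in
  \col_k (if val k == 0%N then x else y).

Definition pauli_phase (e : R) (i : 'I_2) : C :=
  if val i == 0%N then 1 else e%:C * 'i%C.

Lemma pauli_phase0 (e : R) : pauli_phase e 0 = 1. Proof. by []. Qed.

Lemma pauli_phase1 (e : R) : pauli_phase e 1 = e%:C * 'i%C. Proof. by []. Qed.

Lemma pauli_orient_sqr a : pauli_orient a ^+ 2 = 1.
Proof. by rewrite /pauli_orient; case: ifP => _; rewrite ?sqrrN expr1n. Qed.

Lemma sgn_sqr s : sgn s ^+ 2 = 1.
Proof. by case: s; rewrite /sgn ?sqrrN expr1n. Qed.

Lemma pauli_eigvecP a s :
  sigma a *m pauli_eigvec a s = (sgn s)%:C *: pauli_eigvec a s.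
Proof.
apply/matrixP => i j; rewrite (ord1 j).
by case: a => [[|[|[|?]]] ?] //; case: s; case: i => [[|[|?]] ?] //;
  rewrite /sigma /pauli_eigvec !mxE !big_ord_recl !big_ord0 /= !mxE /=; complex_ring.
Qed.

Lemma hsform_pauli_eigvec a s t :
  hsform (pauli_eigvec a s) 1%:M (pauli_eigvec a t) = (s == t)%:R *+ 2.
Proof.
by case: a => [[|[|[|?]]] ?] //; case: s; case: t;
  rewrite hsform1 /mxtrace big_ord1 /pauli_eigvec !mxE !big_ord_recl !big_ord0 /= !mxE /=;
  complex_ring.
Qed.

Lemma hsform_pauli_eigvec_diag a i s :
  hsform (pauli_eigvec a s) (sigma (lift a i)) (pauli_eigvec a s) = 0.
Proof.
by case: a => [[|[|[|?]]] ?] //; case: s; case: i => [[|[|?]] ?] //;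
  rewrite /hsform /mxtrace big_ord1 /sigma /pauli_eigvec !mxE !big_ord_recl !big_ord0 /= !mxE
    !big_ord_recl !big_ord0 /= !mxE /=;
  complex_ring.
Qed.

Lemma hsform_pauli_eigvec_offdiag a i s :
  hsform (pauli_eigvec a s) (sigma (lift a i)) (pauli_eigvec a (~~ s))
  = 2%:R * pauli_phase (sgn s * pauli_orient a) i.
Proof.
by case: a => [[|[|[|?]]] ?] //; case: s; case: i => [[|[|?]] ?] //;
  rewrite /hsform /mxtrace big_ord1 /sigma /pauli_eigvec /pauli_phase /sgn /pauli_orient
    !mxE !big_ord_recl !big_ord0 /= !mxE !big_ord_recl !big_ord0 /= !mxE /=;
  complex_ring.
Qed.

Lemma hsform_pauli_sigma a s t :
  hsform (pauli_eigvec a s) (sigma a) (pauli_eigvec a t) = (sgn t)%:C * ((s == t)%:R *+ 2).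
Proof.
by rewrite /hsform -mulmxA pauli_eigvecP -scalemxAr mxtraceZ -hsform1 hsform_pauli_eigvec.
Qed.

End Pauli.
Arguments sgn {R}.
Arguments pauli_orient {R}.
Arguments pauli_eigvec {R}.

Section PhasePairing.
Variable R : rcfType.
Local Notation C := R[i].

Definition phase_pairing (N : 'M[R]_2) (e1 e2 : R) : C :=
  \sum_i \sum_j (N i j)%:C * (pauli_phase e1 i * pauli_phase e2 j).

Definition phase_sqnorm (N : 'M[R]_2) (e : R) : R :=
  (N 0 0 - e * N 1 1) ^+ 2 + (N 0 1 + e * N 1 0) ^+ 2.

Lemma sqr_eq1_cases (e : R) : e ^+ 2 = 1 -> e = 1 \/ e = -1.
Proof. by move/eqP; rewrite sqrf_eq1 => /orP[]/eqP ->; [left | right]. Qed.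

Lemma phase_pairing_normE (N : 'M[R]_2) e1 e2 : e1 ^+ 2 = 1 -> e2 ^+ 2 = 1 ->
  phase_pairing N e1 e2 * (phase_pairing N e1 e2)^*%C = (phase_sqnorm N (e1 * e2))%:C.
Proof.
move=> /sqr_eq1_cases[]-> /sqr_eq1_cases[]->;
  rewrite /phase_pairing /phase_sqnorm !sum_ord2 !pauli_phase0 !pauli_phase1; complex_ring.
Qed.

Lemma phase_sqnorm_ge0 (N : 'M[R]_2) e : 0 <= phase_sqnorm N e.
Proof. by rewrite addr_ge0 ?sqr_ge0. Qed.

Lemma phase_sqnormD (N : 'M[R]_2) e : e ^+ 2 = 1 ->
  phase_sqnorm N e + phase_sqnorm N (- e) = 2%:R * \tr (N^T *m N).
Proof. by move=> /sqr_eq1_cases[]->; rewrite /phase_sqnorm mxtrace_mulTmx !sum_ord2; ring. Qed.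

Lemma phase_sqnormB (N : 'M[R]_2) e :
  phase_sqnorm N e - phase_sqnorm N (- e) = - (4%:R * e * \det N).
Proof. by rewrite /phase_sqnorm det_mx2; ring. Qed.

End PhasePairing.

Section Spectrum.
Variable R : rcfType.

(* l1 <= 1, as otherwise the cubic would be positive at l1; evaluating at 0 and 2 then
   shows that the pairwise products of the nonnegative 1 - a_i sum to 0. *)
Lemma top_two_roots_eq1 (a1 a2 a3 l1 l2 l3 : R) :
  a1 <= 1 -> a2 <= 1 -> a3 <= 1 -> l3 <= l2 -> l2 <= l1 ->
  ('X - l1%:P) * ('X - l2%:P) * ('X - l3%:P) = ('X - a1%:P) * ('X - a2%:P) * ('X - a3%:P) ->
  l1 + l2 = 2%:R ->
  [/\ (1 - a1) * (1 - a2) = 0, (1 - a1) * (1 - a3) = 0 & (1 - a2) * (1 - a3) = 0].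
Proof.
move=> a1_le1 a2_le1 a3_le1 l32 l21 E l12.
have ev x : (x - l1) * (x - l2) * (x - l3) = (x - a1) * (x - a2) * (x - a3).
  by have := congr1 (horner^~ x) E; rewrite !hornerE.
have l1_le1 : l1 <= 1.
  rewrite leNgt; apply/negP => l1_gt1; have := ev l1.
  rewrite subrr !mul0r => /esym/eqP; rewrite gt_eqF // !mulr_gt0 // subr_gt0; lra.
have [l1E l2E] : l1 = 1 /\ l2 = 1 by split; lra.
subst l1 l2.
have e0 := ev 0; have e2 := ev 2%:R.
have b1 : 0 <= 1 - a1 by rewrite subr_ge0.
have b2 : 0 <= 1 - a2 by rewrite subr_ge0.
have b3 : 0 <= 1 - a3 by rewrite subr_ge0.
have p12 := mulr_ge0 b1 b2; have p13 := mulr_ge0 b1 b3; have p23 := mulr_ge0 b2 b3.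
have S : (1 - a1) * (1 - a2) + (1 - a1) * (1 - a3) + (1 - a2) * (1 - a3) = 0 by lra.
by split; lra.
Qed.

Lemma sqr_le1 (x : R) : -1 <= x -> x <= 1 -> x ^+ 2 <= 1.
Proof. by move=> h1 h2; nra. Qed.

Section Rigidity.
Variables (c0 u v : R).
Hypotheses (u_ge0 : 0 <= u) (v_ge0 : 0 <= v) (u_le : u <= 1 + c0) (v_le : v <= 1 - c0).
(* lra ignores section hypotheses, hence the [move:] starting the proofs below. *)
Local Notation a2 := (((u + v) / 2%:R) ^+ 2).
Local Notation a3 := (((u - v) / 2%:R) ^+ 2).

Lemma mermin_spectrum_le1 : [/\ c0 ^+ 2 <= 1, a2 <= 1 & a3 <= 1].
Proof. by move: u_ge0 v_ge0 u_le v_le => u0 v0 hu hv; split; apply: sqr_le1; lra. Qed.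

Lemma mermin_spectrum_rigid : a3 = 1 -> c0 ^+ 2 = 1 /\ a2 = 1.
Proof.
move: u_ge0 v_ge0 u_le v_le => u0 v0 hu hv.
move=> /eqP; rewrite sqrf_eq1 => /orP[]/eqP d1.
- have -> : c0 = 1 by lra.
  have -> : (u + v) / 2%:R = 1 by lra.
  by rewrite expr1n.
- have -> : c0 = -1 by lra.
  have -> : (u + v) / 2%:R = 1 by lra.
  by rewrite sqrrN expr1n.
Qed.

Lemma mermin_spectrum_collapse : c0 ^+ 2 = 1 -> a2 = a3.
Proof.
move: u_ge0 v_ge0 u_le v_le => u0 v0 hu hv.
move=> /eqP; rewrite sqrf_eq1 => /orP[]/eqP c0E.
- have -> : v = 0 by lra.
  by rewrite addr0 subr0.
- have -> : u = 0 by lra.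
  by rewrite add0r sub0r mulNr sqrrN.
Qed.

Lemma mermin_top_two_iff :
  (exists l1 l2 l3, [/\ l3 <= l2, l2 <= l1,
     ('X - (c0 ^+ 2)%:P) * ('X - a2%:P) * ('X - a3%:P)
       = ('X - l1%:P) * ('X - l2%:P) * ('X - l3%:P)
   & 2%:R = l1 + l2])
  <-> c0 ^+ 2 + a2 + a3 = 3%:R.
Proof.
have [c0_le1 a2_le1 a3_le1] := mermin_spectrum_le1.
split=> [[l1 [l2 [l3 [l32 l21 E l12]]]] | S].
  have [_ p13 p23] := top_two_roots_eq1 c0_le1 a2_le1 a3_le1 l32 l21 (esym E) (esym l12).
  have a3E : a3 = 1.
    have [//|a3_ne1] := eqVneq a3 1.
    have nz : 1 - a3 != 0 by rewrite subr_eq0 eq_sym.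
    have c01 : c0 ^+ 2 = 1.
      by move/eqP: p13; rewrite mulf_eq0 (negbTE nz) orbF subr_eq0 => /eqP <-.
    by move/eqP: p23; rewrite (mermin_spectrum_collapse c01) mulf_eq0 orbb (negbTE nz).
  have [-> ->] := mermin_spectrum_rigid a3E.
  by rewrite a3E; lra.
have [-> -> ->] : [/\ c0 ^+ 2 = 1, a2 = 1 & a3 = 1] by split; lra.
by exists 1, 1, 1; split => //; lra.
Qed.

End Rigidity.
End Spectrum.

Section MerminState.
Variable R : rcfType.
Local Notation C := R[i].
Variables (A B : 'I_3) (c0 : R) (c : 'I_3 -> 'I_3 -> R).

Local Notation pauli2 a b := (sigma a *t sigma b : 'M[C]_(2 * 2)).

Definition mermin_state : 'M[C]_(2 * 2) :=
  4%:R^-1 *: (1%:M + c0%:C *: (sigma A *t sigma B)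
    + \sum_(a < 3 | a != A) \sum_(b < 3 | b != B) (c a b)%:C *: (sigma a *t sigma b)).

Definition mermin_corr : 'M[R]_3 :=
  \matrix_(a, b) if a == A then (if b == B then c0 else 0)
                 else if b == B then 0 else c a b.

Definition mermin_block : 'M[R]_2 := \matrix_(i, j) c (lift A i) (lift B j).

Local Notation rho := mermin_state.
Local Notation W := mermin_corr.
Local Notation K := mermin_block.

Lemma mxtrace_pauli2 a b : \tr (pauli2 a b) = 0.
Proof. by rewrite mxtrace_tens mxtrace_sigma mul0r. Qed.

Lemma mxtrace_pauli2M a b a' b' :
  \tr (pauli2 a b *m pauli2 a' b') = 4%:R * (a == a')%:R * (b == b')%:R.
Proof. by rewrite tensmx_mul mxtrace_tens !mxtrace_sigmaM; ring. Qed.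

Lemma mxtrace_mermin_pauli a b : \tr (rho *m pauli2 a b) = (W a b)%:C.
Proof.
have nz4 : (4%:R : C) != 0 by rewrite pnatr_eq0.
rewrite -[(W a b)%:C](mulKf nz4) /mermin_state -scalemxAl mxtraceZ; congr (_ * _).
rewrite !mulmxDl !mxtraceD mul1mx mxtrace_pauli2 -scalemxAl mxtraceZ mxtrace_pauli2M.
rewrite mulmx_suml mxtrace_sum.
under eq_bigr => a' _.
  rewrite mulmx_suml mxtrace_sum.
  under eq_bigr => b' _ do rewrite -scalemxAl mxtraceZ mxtrace_pauli2M mulrA.
  rewrite sum_delta.
  over.
rewrite /mermin_corr mxE /=.
have [->|aA] := eqVneq a A; have [->|bB] := eqVneq b B.
- by rewrite big1 //=; ring.
- rewrite big1 => [|a' a'A] /=; first by ring.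
  by rewrite (negbTE a'A) /=; ring.
- by rewrite big1 //=; ring.
- under eq_bigr => a' _ do rewrite /= mulrA.
  by rewrite sum_delta aA /=; ring.
Qed.

Lemma corr_mx_mermin : corr_mx rho = W.
Proof. by apply/matrixP => a b; rewrite mxE mxtrace_mermin_pauli. Qed.

Lemma mxtrace_mermin : \tr rho = 1.
Proof.
rewrite /mermin_state mxtraceZ !mxtraceD mxtrace1 mxtraceZ mxtrace_pauli2.
rewrite mxtrace_sum big1 => [|a _]; last first.
  by rewrite mxtrace_sum big1 // => b _; rewrite mxtraceZ mxtrace_pauli2 mulr0.
by rewrite mulr0 !addr0 mulVf // pnatr_eq0.
Qed.

Lemma mxtrace_mermin_sqr :
  \tr (rho *m rho) = (4%:R^-1 * (1 + c0 ^+ 2 + \tr (K^T *m K)))%:C.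
Proof.
rewrite {2}/mermin_state -scalemxAr mxtraceZ !mulmxDr !mxtraceD mulmx1 mxtrace_mermin.
rewrite -scalemxAr mxtraceZ mxtrace_mermin_pauli mulmx_sumr mxtrace_sum.
under eq_bigr => a aA.
  rewrite mulmx_sumr mxtrace_sum.
  under eq_bigr => b bB do
    rewrite -scalemxAr mxtraceZ mxtrace_mermin_pauli mxE (negbTE aA) (negbTE bB) /=.
  over.
rewrite /mermin_corr mxE !eqxx /= sum_neq_lift.
under eq_bigr => i _ do rewrite sum_neq_lift.
have -> : \sum_(i < 2) \sum_(j < 2) (c (lift A i) (lift B j))%:C * (c (lift A i) (lift B j))%:C
    = (\tr (K^T *m K))%:C.
  rewrite mxtrace_mulTmx rmorph_sum; apply: eq_bigr => i _.
  by rewrite rmorph_sum; apply: eq_bigr => j _; rewrite mxE rmorphXn expr2.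
by field.
Qed.

Lemma mermin_corrA b : W A b = if b == B then c0 else 0.
Proof. by rewrite mxE eqxx. Qed.

Lemma mermin_corr_lift k b : W (lift A k) b = if b == B then 0 else c (lift A k) b.
Proof. by rewrite mxE lift_eqF. Qed.

Lemma mermin_gramE x y :
  (W^T *m W) x y = W A x * W A y + \sum_k W (lift A k) x * W (lift A k) y.
Proof. by rewrite mulTmxE (bigD1_ord A). Qed.

Lemma char_poly_mermin :
  char_poly (W^T *m W)
  = ('X - (c0 ^+ 2)%:P) * ('X^2 - (\tr (K^T *m K))%:P * 'X + (\det K ^+ 2)%:P).
Proof.
rewrite (char_poly_expand_row (i := B)) => [|y yB]; last first.
  rewrite mermin_gramE !mermin_corrA eqxx (negbTE yB) /= mulr0 add0r.
  by rewrite big1 // => k _; rewrite mermin_corr_lift eqxx /= mul0r.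
have -> : (W^T *m W) B B = c0 ^+ 2.
  rewrite mermin_gramE mermin_corrA eqxx /= big1 ?addr0 ?expr2 // => k _.
  by rewrite mermin_corr_lift eqxx /= mul0r.
have -> : row' B (col' B (W^T *m W)) = K^T *m K.
  apply/matrixP => i j; rewrite [row' _ _ _ _]mxE [col' _ _ _ _]mxE mermin_gramE.
  rewrite mermin_corrA lift_eqF /= mul0r add0r mulTmxE; apply: eq_bigr => k _.
  by rewrite !mermin_corr_lift !lift_eqF /= !mxE.
by rewrite char_poly2 det_mulmx det_tr expr2.
Qed.

Lemma mermin_stateE :
  rho = 4%:R^-1 *: (1%:M + c0%:C *: (sigma A *t sigma B)
    + \sum_(i < 2) \sum_(j < 2) (K i j)%:C *: (sigma (lift A i) *t sigma (lift B j))).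
Proof.
rewrite /mermin_state sum_neq_lift; congr (_ *: (_ + _)); apply: eq_bigr => i _.
by rewrite sum_neq_lift; apply: eq_bigr => j _; rewrite mxE.
Qed.

Lemma hsform_mermin_tens (X X' Y Y' : 'cV[C]_2) :
  hsform (X *t Y) rho (X' *t Y') = 4%:R^-1 * (hsform X 1%:M X' * hsform Y 1%:M Y'
    + c0%:C * (hsform X (sigma A) X' * hsform Y (sigma B) Y')
    + \sum_i \sum_j (K i j)%:C
        * (hsform X (sigma (lift A i)) X' * hsform Y (sigma (lift B j)) Y')).
Proof.
rewrite mermin_stateE hsformZ !hsformD -[1%:M](@tensmx11 _ 2 2) hsformZ !hsform_tens.
rewrite hsform_sum; congr (_ * (_ + _)); apply: eq_bigr => i _.
by rewrite hsform_sum; apply: eq_bigr => j _; rewrite hsformZ hsform_tens.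
Qed.

Local Notation e := pauli_eigvec.

Lemma hsform_mermin_diag s t :
  hsform (e A s *t e B t) rho (e A s *t e B t) = (1 + sgn s * sgn t * c0)%:C.
Proof.
rewrite hsform_mermin_tens !hsform_pauli_eigvec !hsform_pauli_sigma !eqxx.
rewrite big1 => [|i _]; last first.
  by rewrite big1 // => j _; rewrite !hsform_pauli_eigvec_diag !mulr0.
by rewrite /=; field.
Qed.

Lemma hsform_mermin_offdiag t :
  hsform (e A true *t e B t) rho (e A false *t e B (~~ t))
  = phase_pairing K (pauli_orient A) (sgn t * pauli_orient B).
Proof.
have offE i j : hsform (e A true) (sigma (lift A i)) (e A false)
    * hsform (e B t) (sigma (lift B j)) (e B (~~ t))
    = 4%:R * (pauli_phase (pauli_orient A) i * pauli_phase (sgn t * pauli_orient B) j).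
  by rewrite -[e A false]/(e A (~~ true)) !hsform_pauli_eigvec_offdiag /= mul1r; ring.
rewrite hsform_mermin_tens /phase_pairing.
under eq_bigr => i _ do under eq_bigr => j _ do rewrite offE mulrCA.
under eq_bigr => i _ do rewrite -mulr_sumr.
rewrite -mulr_sumr !hsform_pauli_eigvec !hsform_pauli_sigma.
by clear offE; case: t => /=; field.
Qed.

Local Notation eta := (pauli_orient A * pauli_orient B).
Local Notation u := (Num.sqrt (phase_sqnorm K eta)).
Local Notation v := (Num.sqrt (phase_sqnorm K (- eta))).

Lemma eta_sqr : eta ^+ 2 = 1 :> R.
Proof. by rewrite exprMn !pauli_orient_sqr mulr1. Qed.

Lemma mermin_block_trace : \tr (K^T *m K) = ((u + v) / 2%:R) ^+ 2 + ((u - v) / 2%:R) ^+ 2.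
Proof.
have -> : ((u + v) / 2%:R) ^+ 2 + ((u - v) / 2%:R) ^+ 2 = (u ^+ 2 + v ^+ 2) / 2%:R by field.
by rewrite !sqr_sqrtr ?phase_sqnorm_ge0 // phase_sqnormD ?eta_sqr //; field.
Qed.

Lemma mermin_block_det : \det K ^+ 2 = ((u + v) / 2%:R) ^+ 2 * ((u - v) / 2%:R) ^+ 2.
Proof.
have -> : ((u + v) / 2%:R) ^+ 2 * ((u - v) / 2%:R) ^+ 2 = ((u ^+ 2 - v ^+ 2) / 4%:R) ^+ 2.
  by field.
rewrite !sqr_sqrtr ?phase_sqnorm_ge0 // phase_sqnormB.
have -> : - (4%:R * eta * \det K) / 4%:R = - (eta * \det K) by field.
by rewrite sqrrN exprMn eta_sqr mul1r.
Qed.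

Lemma char_poly_mermin_spectrum :
  char_poly (W^T *m W) = ('X - (c0 ^+ 2)%:P) * ('X - (((u + v) / 2%:R) ^+ 2)%:P)
                         * ('X - (((u - v) / 2%:R) ^+ 2)%:P).
Proof.
by rewrite char_poly_mermin -mulrA monic_quadratic_factor mermin_block_trace mermin_block_det.
Qed.

Lemma mxtrace_mermin_sqr_spectrum : \tr (rho *m rho)
  = (4%:R^-1 * (1 + (c0 ^+ 2 + ((u + v) / 2%:R) ^+ 2 + ((u - v) / 2%:R) ^+ 2)))%:C.
Proof. by rewrite mxtrace_mermin_sqr mermin_block_trace !addrA. Qed.

Section Positivity.
Hypotheses (herm : adjmx rho = rho)
  (psd : forall x : 'cV[C]_(2 * 2), 0 <= (adjmx x *m rho *m x) 0 0).

(* Cauchy-Schwarz for rho on the eigenspace of sigma A (x) sigma B for the eigenvalue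
   sgn t, spanned by e A true (x) e B t and e A false (x) e B (~~ t). *)
Lemma mermin_psd_bound t :
  0 <= 1 + sgn t * c0 /\ phase_sqnorm K (sgn t * eta) <= (1 + sgn t * c0) ^+ 2.
Proof.
have psdV := psd_hsform psd.
have sgnE : sgn false * sgn (~~ t) = sgn true * sgn t :> R by case: t; rewrite /sgn /=; ring.
have du := hsform_mermin_diag true t; have dw := hsform_mermin_diag false (~~ t).
rewrite sgnE /= mul1r in dw; rewrite /= mul1r in du; split; first by rewrite -ler0c -du psdV.
have := hsform_cauchy_schwarz (e A true *t e B t) (e A false *t e B (~~ t))
  herm (psdV _).
rewrite hsform_mermin_offdiag du dw phase_pairing_normE ?pauli_orient_sqr ?exprMn ?sgn_sqr
  ?pauli_orient_sqr ?mulr1 //.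
by rewrite -rmorphM lecR mulrCA expr2.
Qed.

Lemma mermin_sqrt_bounds : u <= 1 + c0 /\ v <= 1 - c0.
Proof.
have sqrt_le x y : 0 <= y -> x <= y ^+ 2 -> Num.sqrt x <= y.
  by move=> y0 xy; rewrite -(ger0_norm y0) -sqrtr_sqr ler_wsqrtr.
have [hp P_le] := mermin_psd_bound true; have [hm M_le] := mermin_psd_bound false.
rewrite /= !mul1r in hp P_le; rewrite /= !mulN1r in hm M_le.
by split; apply: sqrt_le.
Qed.

End Positivity.

End MerminState.

Lemma quarter_one_plus_eq1 (R : rcfType) (S : R) :
  ((4%:R^-1 * (1 + S))%:C = 1 :> R[i]) <-> S = 3%:R.
Proof.
split=> [/(congr1 (@complex.Re R))|->]; first by rewrite ReC Re1; lra.
by apply: complexP; rewrite ?ReC ?ImC ?Re1 ?Im1; lra.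
Qed.

Theorem proposition6 (R : rcfType) (A B : 'I_3) (c0 : R)
  (c : 'I_3 -> 'I_3 -> R) (rho : 'M[R[i]]_(2 * 2)) :
  rho = 4%:R^-1 *: (1%:M + c0%:C *: (sigma A *t sigma B)
          + \sum_(a < 3 | a != A) \sum_(b < 3 | b != B)
              (c a b)%:C *: (sigma a *t sigma b)) ->
  density_matrix rho ->
  (horodecki_M_is rho 2 <-> \tr (rho *m rho) = 1).
Proof.
move=> Erho [herm _ psd]; have {}Erho : rho = mermin_state A B c0 c := Erho.
subst rho; have [u_le v_le] := mermin_sqrt_bounds herm psd.
rewrite /horodecki_M_is corr_mx_mermin char_poly_mermin_spectrum mxtrace_mermin_sqr_spectrum.
exact: iff_trans (mermin_top_two_iff (sqrtr_ge0 _) (sqrtr_ge0 _) u_le v_le)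
  (iff_sym (quarter_one_plus_eq1 _)).
Qed.
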